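(* Let $(\mathbf{H},m,\Delta)$ be a commutative and cocommutative set Hopf monoid, and equip each $\mathbf{H}[I]$ with the reassembly partial order $\le_r$. Then $\mathbf{H}$ is a poset Hopf monoid with respect to these orders, and it is self-adjoint with $\Delta\dashv m$, i.e. for every decomposition $I=S\sqcup T$ and all $x\in\mathbf{H}[I]$, $y\in\mathbf{H}[S]$, $z\in\mathbf{H}[T]$: $\Delta_{S,T}(x)\le_r(y,z)$ (product order) if and only if $x\le_r m_{S,T}(y,z)$.
   Context: A (connected) set species $\mathbf{H}$ assigns to each finite set $I$ a finite set $\mathbf{H}[I]$, with $\mathbf{H}[\emptyset]=\{1\}$, and to each bijection $f:I\to J$ a bijection $\mathbf{H}[f]$, functorially. A set Hopf monoid $(\mathbf{H},m,\Delta)$ has maps $m_{S,T}:\mathbf{H}[S]\times\mathbf{H}[T]\to\mathbf{H}[S\sqcup T]$ (natural in bijections, associative, with unit $1$) and $\Delta_{S,T}:\mathbf{H}[S\sqcup T]\to\mathbf{H}[S]\times\mathbf{H}[T]$ (natural, coassociative, counital: $\Delta_{I,\emptyset}(x)=(x,1)$, $\Delta_{\emptyset,I}(x)=(1,x)$), satisfying compatibility: for $I=S_1\sqcup S_2=T_1\sqcup T_2$, $A=S_1\cap T_1$, $B=S_1\cap T_2$, $C=S_2\cap T_1$, $D=S_2\cap T_2$, if $\Delta_{A,B}(x)=(x_A,x_B)$, $\Delta_{C,D}(y)=(y_C,y_D)$ then $\Delta_{T_1,T_2}(m_{S_1,S_2}(x,y))=(m_{A,C}(x_A,y_C),m_{B,D}(x_B,y_D))$.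 Iterated maps $m_{S_1,\dots,S_k}$, $\Delta_{S_1,\dots,S_k}$ are defined by (co)associativity. It is commutative if $m_{S,T}(x,y)=m_{T,S}(y,x)$ and cocommutative if $\Delta_{S,T}(x)=(y,z)\iff\Delta_{T,S}(x)=(z,y)$. The reassembly relation: $x\le_r y$ for $x,y\in\mathbf{H}[I]$ iff $y=m_{S_1,\dots,S_k}\circ\Delta_{S_1,\dots,S_k}(x)$ for some set partition $S_1\sqcup\dots\sqcup S_k=I$; for commutative and cocommutative $\mathbf{H}$ this is a partial order (Marberg). A poset Hopf monoid is a set Hopf monoid together with partial orders on each $\mathbf{H}[I]$ such that all relabelling maps $\mathbf{H}[f]$, all $m_{S,T}$ and all $\Delta_{S,T}$ are order-preserving (product orders on products). It is self-adjoint if the monoid $(\mathbf{H},m)$ and comonoid $(\mathbf{H},\Delta)$ form an adjoint pair, i.e. $m_{S,T}$ and $\Delta_{S,T}$ form a Galois connection for all $S,T$. *)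

From HB Require Import structures.
From mathcomp Require Import all_boot.
From mathcomp Require Import finmap.

Set Implicit Arguments.
Unset Strict Implicit.
Unset Printing Implicit Defensive.

Local Open Scope fset_scope.

(* Finite sets are represented as finite subsets of nat (an equivalent
   skeleton-free full subcategory of finite sets and bijections). *)
Notation fs := {fset nat}.

Definition tr (H : fs -> finType) (I J : fs) (e : I = J) (x : H I) : H J :=
  match e in _ = K return H K with erefl => x end.
Arguments tr {H I J} e x.

Definition bij_on (f : nat -> nat) (I J : fs) : Prop :=
  {in I &, injective f} /\ [fset f a | a in I] = J.

Record set_hopf_monoid := SetHopfMonoid {
  hcar :> fs -> finType;
  hrel : forall (I J : fs) (f : nat -> nat), bij_on f I J -> hcar I -> hcar J;
  hone : hcar fset0;
  hm : forall (S T : fs), fdisjoint S T -> hcar S -> hcar T -> hcar (S `|` T);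
  hd : forall (S T : fs), fdisjoint S T -> hcar (S `|` T) -> hcar S * hcar T;
  hone_uniq : forall x : hcar fset0, x = hone;
  hrel_ext : forall I J f g (p : bij_on f I J) (q : bij_on g I J),
    {in I, f =1 g} -> forall x, hrel p x = hrel q x;
  hrel_id : forall I (p : bij_on id I I) x, hrel p x = x;
  hrel_comp : forall I J K f g (p : bij_on f I J) (q : bij_on g J K)
    (r : bij_on (g \o f) I K) x, hrel q (hrel p x) = hrel r x;
  hm_nat : forall S T S' T' f (d : fdisjoint S T) (d' : fdisjoint S' T')
    (p : bij_on f (S `|` T) (S' `|` T')) (pS : bij_on f S S') (pT : bij_on f T T') x y,
    hrel p (hm d x y) = hm d' (hrel pS x) (hrel pT y);
  hd_nat : forall S T S' T' f (d : fdisjoint S T) (d' : fdisjoint S' T')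
    (p : bij_on f (S `|` T) (S' `|` T')) (pS : bij_on f S S') (pT : bij_on f T T') x,
    hd d' (hrel p x) = (hrel pS (hd d x).1, hrel pT (hd d x).2);
  hm_assoc : forall S T U (d1 : fdisjoint S (T `|` U)) (d2 : fdisjoint T U)
    (d3 : fdisjoint (S `|` T) U) (d4 : fdisjoint S T) x y z,
    tr (fsetUA S T U) (hm d1 x (hm d2 y z)) = hm d3 (hm d4 x y) z;
  hm_unitl : forall I (d : fdisjoint fset0 I) x, tr (fset0U I) (hm d hone x) = x;
  hm_unitr : forall I (d : fdisjoint I fset0) x, tr (fsetU0 I) (hm d x hone) = x;
  hd_coassoc : forall S T U (d1 : fdisjoint S (T `|` U)) (d2 : fdisjoint T U)
    (d3 : fdisjoint (S `|` T) U) (d4 : fdisjoint S T) x,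
    let r := hd d1 x in
    let l := hd d3 (tr (fsetUA S T U) x) in
    [/\ (hd d4 l.1).1 = r.1, (hd d4 l.1).2 = (hd d2 r.2).1 & l.2 = (hd d2 r.2).2];
  hd_counitr : forall I (d : fdisjoint I fset0) x,
    hd d (tr (esym (fsetU0 I)) x) = (x, hone);
  hd_counitl : forall I (d : fdisjoint fset0 I) x,
    hd d (tr (esym (fset0U I)) x) = (hone, x);
  (* compatibility: I = S1 + S2 = T1 + T2, A = S1 & T1, B = S1 & T2,
     C = S2 & T1, D = S2 & T2 *)
  hcompat : forall S1 S2 T1 T2 (dS : fdisjoint S1 S2) (dT : fdisjoint T1 T2)
    (e : S1 `|` S2 = T1 `|` T2)
    (eS1 : S1 = (S1 `&` T1) `|` (S1 `&` T2)) (eS2 : S2 = (S2 `&` T1) `|` (S2 `&` T2))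
    (eT1 : (S1 `&` T1) `|` (S2 `&` T1) = T1) (eT2 : (S1 `&` T2) `|` (S2 `&` T2) = T2)
    (dAB : fdisjoint (S1 `&` T1) (S1 `&` T2)) (dCD : fdisjoint (S2 `&` T1) (S2 `&` T2))
    (dAC : fdisjoint (S1 `&` T1) (S2 `&` T1)) (dBD : fdisjoint (S1 `&` T2) (S2 `&` T2))
    (x : hcar S1) (y : hcar S2),
    let px := hd dAB (tr eS1 x) in
    let py := hd dCD (tr eS2 y) in
    hd dT (tr e (hm dS x y)) = (tr eT1 (hm dAC px.1 py.1), tr eT2 (hm dBD px.2 py.2))
}.

Arguments hrel {s I J f} p x.
Arguments hm {s S T} d x y.
Arguments hd {s S T} d x.
Arguments hone {s}.

Definition commutative_hm (H : set_hopf_monoid) : Prop :=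
  forall S T (d : fdisjoint S T) (d' : fdisjoint T S) (x : H S) (y : H T),
    tr (fsetUC S T) (hm d x y) = hm d' y x.

Definition cocommutative_hm (H : set_hopf_monoid) : Prop :=
  forall S T (d : fdisjoint S T) (d' : fdisjoint T S) (x : H (S `|` T)),
    hd d' (tr (fsetUC S T) x) = ((hd d x).2, (hd d x).1).

(* ordered set partitions S_1, ..., S_k (blocks nonempty, pairwise disjoint) *)
Fixpoint bigU (l : seq fs) : fs :=
  if l is B :: l' then B `|` bigU l' else fset0.

Fixpoint is_setpart (l : seq fs) : bool :=
  if l is B :: l' then [&& B != fset0, fdisjoint B (bigU l') & is_setpart l']
  else true.

Lemma setpart_disj S l : is_setpart (S :: l) -> fdisjoint S (bigU l).
Proof. by case/and3P. Qed.

Lemma setpart_tail S l : is_setpart (S :: l) -> is_setpart l.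
Proof. by case/and3P. Qed.

(* m_{S1,...,Sk} o Delta_{S1,...,Sk}, iterated maps defined by right nesting *)
Fixpoint reas (H : set_hopf_monoid) (l : seq fs) :
  is_setpart l -> H (bigU l) -> H (bigU l) :=
  match l return is_setpart l -> H (bigU l) -> H (bigU l) with
  | [::] => fun _ x => x
  | B :: l' => fun pl x =>
      let d := setpart_disj pl in
      let p := hd d x in
      hm d p.1 (reas (setpart_tail pl) p.2)
  end.

Definition reassembly (H : set_hopf_monoid) (I : fs) (x y : H I) : Prop :=
  exists (l : seq fs) (pl : is_setpart l) (e : bigU l = I),
    y = tr e (reas pl (tr (esym e) x)).

Definition is_poset_hopf (H : set_hopf_monoid)
    (le : forall I : fs, H I -> H I -> Prop) : Prop :=
  [/\ (forall I, (forall x, le I x x) /\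
                 (forall x y, le I x y -> le I y x -> x = y) /\
                 (forall x y z, le I x y -> le I y z -> le I x z)),
      (forall I J f (p : bij_on f I J) x y, le I x y -> le J (hrel p x) (hrel p y)),
      (forall S T (d : fdisjoint S T) x x' y y',
          le S x x' -> le T y y' -> le (S `|` T) (hm d x y) (hm d x' y'))
    & (forall S T (d : fdisjoint S T) x x',
          le (S `|` T) x x' -> le S (hd d x).1 (hd d x').1 /\ le T (hd d x).2 (hd d x').2)].

Definition self_adjoint (H : set_hopf_monoid)
    (le : forall I : fs, H I -> H I -> Prop) : Prop :=
  forall S T (d : fdisjoint S T) (x : H (S `|` T)) (y : H S) (z : H T),
    (le S (hd d x).1 y /\ le T (hd d x).2 z) <-> le (S `|` T) x (hm d y z).

Arguments reassembly : clear implicits.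
Arguments is_poset_hopf : clear implicits.
Arguments self_adjoint : clear implicits.

From Pilot Require Import Defs.
From HB Require Import structures.
From mathcomp Require Import all_boot.
From mathcomp Require Import finmap.
From Stdlib Require Import Eqdep_dec.

(* All the H[I] are gathered in one total space of pairs (I, x).  Restricting x : H[I] to a set A
   means taking the first component of Delta_{I&A, I\A}(x).  Coassociativity gives
   (x|B)|A = x|(B&A), cocommutativity identifies the second component of Delta_{S,T}(x) with x|T,
   and the compatibility axiom makes restriction multiplicative for the product of the total
   space, which is partial (supports must be disjoint) and, by commutativity, a commutative
   monoid once a zero is adjoined.  Hence m_l(Delta_l(x)) is the product of the restrictions x|B,
   B in l, and this makes sense for every list l covering each point exactly once.  Reassembling
   along l1 and then along l2 is reassembling along the meet [B & C | B in l1, C in l2]: this gives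
   transitivity, and also that any two reassembly maps commute while each is idempotent, which
   gives antisymmetry.  Since m_{S,T}(y, z) restricts to y on S and to z on T, covers of S and
   of T concatenate into a cover of S + T; this yields the monotonicity of m and Delta and the
   adjunction. *)

Set Implicit Arguments.
Unset Strict Implicit.
Unset Printing Implicit Defensive.
Local Open Scope fset_scope.

Ltac fset_tac :=
  rewrite ?inE; repeat match goal with |- context [?a \in ?X] => case: (a \in X) end;
  rewrite /is_true /=; intuition congruence.

Section ReassemblyOrder.
Variable H : set_hopf_monoid.
Hypothesis Hcom : commutative_hm H.
Hypothesis Hcoc : cocommutative_hm H.
Implicit Types (I J K S T A B : fs) (l : seq fs) (f : nat -> nat).

Definition elt := {I : fs & H I}.
Definition pack (I : fs) (x : H I) : elt := existT (fun I => H I) I x.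

Lemma pack_ind (P : elt -> Prop) : (forall I (x : H I), P (pack x)) -> forall u, P u.
Proof. by move=> PH [I x]; apply: PH. Qed.

Lemma pack_inj I : injective (@pack I).
Proof. by move=> x y; apply: inj_pair2_eq_dec => J K; exact: (decP eqP). Qed.

Lemma pack_tr I J (e : I = J) (x : H I) : pack (tr e x) = pack x.
Proof. by case: J / e. Qed.

Lemma tr_trans I J K (e1 : I = J) (e2 : J = K) (x : H I) :
  tr e2 (tr e1 x) = tr (etrans e1 e2) x.
Proof. by case: K / e2; case: J / e1. Qed.

Lemma pack_hd I S T S' T' (x : H I) (e : I = S `|` T) (e' : I = S' `|` T')
    (d : fdisjoint S T) (d' : fdisjoint S' T') :
  S = S' -> T = T' ->
  pack (hd d' (tr e' x)).1 = pack (hd d (tr e x)).1 /\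
  pack (hd d' (tr e' x)).2 = pack (hd d (tr e x)).2.
Proof. by move=> eS eT; subst S' T'; rewrite (eq_irrelevance e e') (bool_irrelevance d d'). Qed.

Definition one : elt := pack (@hone H).

Lemma pack0 (x : H fset0) : pack x = one.
Proof. by rewrite (hone_uniq x). Qed.

Lemma tag0 (u : elt) : tag u = fset0 -> u = one.
Proof. by elim/pack_ind: u => I x /= eI; subst I; apply: pack0. Qed.

(** * Restriction *)

Lemma fdisjointID (I A : fs) : fdisjoint (I `&` A) (I `\` A).
Proof. by apply/fdisjointP => a; fset_tac. Qed.

Definition restr (A : fs) (u : elt) : elt :=
  let: existT K x := u in pack (hd (fdisjointID K A) (tr (esym (fsetID A K)) x)).1.
Arguments restr : simpl never.

Lemma restrE I S T A (x : H I) (d : fdisjoint S T) (e : I = S `|` T) :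
  I `&` A = S -> restr A (pack x) = pack (hd d (tr e x)).1.
Proof.
move=> eS; have eT : I `\` A = T.
  apply/fsetP => a; move: (fdisjointP d a) (congr1 (fun X => a \in X) e).
  by rewrite -eS; fset_tac.
by case: (pack_hd x e (esym (fsetID A I)) d (fdisjointID I A) (esym eS) (esym eT)).
Qed.

Lemma restrE2 I S T A (x : H I) (d : fdisjoint S T) (e : I = S `|` T) :
  I `&` A = T -> restr A (pack x) = pack (hd d (tr e x)).2.
Proof.
move=> eT; have d' : fdisjoint T S by rewrite fdisjoint_sym.
have := congr1 fst (Hcoc d d' (tr e x)); rewrite tr_trans /= => <-.
exact: restrE.
Qed.

Lemma restr_hdl S T (d : fdisjoint S T) (x : H (S `|` T)) : restr S (pack x) = pack (hd d x).1.
Proof. by rewrite (restrE x d (erefl _)) // fsetUKC. Qed.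

Lemma restr_hdr S T (d : fdisjoint S T) (x : H (S `|` T)) : restr T (pack x) = pack (hd d x).2.
Proof. by rewrite (restrE2 x d (erefl _)) // fsetUK. Qed.

Lemma tag_restr A u : tag (restr A u) = tag u `&` A.
Proof. by elim/pack_ind: u. Qed.

Lemma restr_one A : restr A one = one.
Proof. by apply: tag0; rewrite tag_restr /= fset0I. Qed.

Lemma restr_id A u : tag u `<=` A -> restr A u = u.
Proof.
elim/pack_ind: u => I x /= sIA.
rewrite (restrE x (fdisjointX0 I) (esym (fsetU0 I))) ?hd_counitr //.
exact/fsetIidPl.
Qed.

Lemma restr_disjoint A u : fdisjoint (tag u) A -> restr A u = one.
Proof. by move=> d; apply: tag0; rewrite tag_restr disjoint_fsetI0. Qed.

Lemma restr_eq A B u : tag u `&` A = tag u `&` B -> restr A u = restr B u.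
Proof.
elim/pack_ind: u => I x /= e.
by rewrite [RHS](restrE x (fdisjointID I A) (esym (fsetID A I)) (esym e)).
Qed.

Lemma restr_restr A B u : restr A (restr B u) = restr (B `&` A) u.
Proof.
elim/pack_ind: u => I x.
pose P := I `&` B `&` A; pose Q := I `&` B `\` A; pose R := I `\` B.
have e : I = P `|` (Q `|` R) by apply/fsetP => a; rewrite /P /Q /R; fset_tac.
have d1 : fdisjoint P (Q `|` R) by apply/fdisjointP => a; rewrite /P /Q /R; fset_tac.
have d2 : fdisjoint Q R by apply/fdisjointP => a; rewrite /Q /R; fset_tac.
have d3 : fdisjoint (P `|` Q) R by apply/fdisjointP => a; rewrite /P /Q /R; fset_tac.
have d4 : fdisjoint P Q by apply/fdisjointP => a; rewrite /P /Q; fset_tac.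
have [coassoc _ _] := hd_coassoc d1 d2 d3 d4 (tr e x).
rewrite (restrE x d3 (etrans e (fsetUA P Q R))); last by apply/fsetP => a; rewrite /P /Q; fset_tac.
rewrite (restrE _ d4 (erefl (P `|` Q))); last by apply/fsetP => a; rewrite /P /Q; fset_tac.
rewrite (restrE x d1 e); last by apply/fsetP => a; rewrite /P; fset_tac.
by rewrite -coassoc tr_trans.
Qed.

(** * The partial product *)

Definition mul_elt (u v : elt) : option elt :=
  let: existT K1 x := u in let: existT K2 y := v in
  if fdisjoint K1 K2 =P true is ReflectT d then Some (pack (hm d x y)) else None.
Arguments mul_elt : simpl never.

Variant mul_elt_spec S T (x : H S) (y : H T) : option elt -> Type :=
 | MulDisjoint (d : fdisjoint S T) : mul_elt_spec x y (Some (pack (hm d x y)))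
 | MulOverlap of ~~ fdisjoint S T : mul_elt_spec x y None.

Lemma mul_eltP S T (x : H S) (y : H T) : mul_elt_spec x y (mul_elt (pack x) (pack y)).
Proof. by rewrite /mul_elt /=; case: eqP => [d|/negP nd]; constructor. Qed.

Lemma mul_elt_pack S T (d : fdisjoint S T) (x : H S) (y : H T) :
  mul_elt (pack x) (pack y) = Some (pack (hm d x y)).
Proof. by case: mul_eltP => [d'|]; [rewrite (bool_irrelevance d' d) | rewrite d]. Qed.

Definition omul (a b : option elt) : option elt :=
  if a is Some u then if b is Some v then mul_elt u v else None else None.

Ltac disjoint_cases := repeat match goal with
  | h : is_true (fdisjoint _ _) |- _ => rewrite h
  | h : is_true (~~ fdisjoint _ _) |- _ => rewrite (negbTE h) end;
  repeat match goal with |- context [fdisjoint ?A ?B] => case: (fdisjoint A B) end; by [].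

Lemma omulA : associative omul.
Proof.
case=> [u|] [v|] [w|] //=; last by case: (mul_elt u v).
elim/pack_ind: u => S x; elim/pack_ind: v => T y; elim/pack_ind: w => U z.
have := fdisjointUX S T U; have := fdisjointXU S T U.
case: (mul_eltP x y) => [d4|n4]; case: (mul_eltP y z) => [d2|n2] /=; try disjoint_cases.
- case: (mul_eltP (hm d4 x y) z) => [d3|n3]; case: (mul_eltP x (hm d2 y z)) => [d1|n1];
    try disjoint_cases.
  by move=> _ _; rewrite -(hm_assoc d1 d2 d3 d4) pack_tr.
- by case: (mul_eltP (hm d4 x y) z) => [d3|n3]; disjoint_cases.
- by case: (mul_eltP x (hm d2 y z)) => [d1|n1]; disjoint_cases.
Qed.

Lemma omulC : commutative omul.
Proof.
case=> [u|] [v|] //=; elim/pack_ind: u => S x; elim/pack_ind: v => T y.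
have := fdisjoint_sym S T.
case: (mul_eltP x y) => [d|]; case: (mul_eltP y x) => [d'|]; try disjoint_cases.
by rewrite -(Hcom d d') pack_tr.
Qed.

Lemma omul1 : left_id (Some one) omul.
Proof.
case=> [u|] //=; elim/pack_ind: u => I x /=.
by rewrite (mul_elt_pack (fdisjoint0X I)) -[in RHS](hm_unitl (fdisjoint0X I) x) pack_tr.
Qed.

HB.instance Definition _ := Monoid.isComLaw.Build (option elt) (Some one) omul omulA omulC omul1.

Lemma omul_some a b w : omul a b = Some w ->
  exists S T (d : fdisjoint S T) (x : H S) (y : H T),
    [/\ a = Some (pack x), b = Some (pack y) & w = pack (hm d x y)].
Proof.
case: a b => [u|] [v|] //; elim/pack_ind: u => S x; elim/pack_ind: v => T y /=.
by case: mul_eltP => [d|] // [<-]; exists S, T, d, x, y.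
Qed.

(* The compatibility axiom, for the decompositions S1 + S2 and (I & A) + (I \ A). *)
Lemma restr_mul A S1 S2 (d : fdisjoint S1 S2) (x : H S1) (y : H S2) :
  Some (restr A (pack (hm d x y))) = omul (Some (restr A (pack x))) (Some (restr A (pack y))).
Proof.
pose I := S1 `|` S2; pose T1 := I `&` A; pose T2 := I `\` A.
have eS1 : S1 = (S1 `&` T1) `|` (S1 `&` T2) by apply/fsetP => a; rewrite /T1 /T2 /I; fset_tac.
have eS2 : S2 = (S2 `&` T1) `|` (S2 `&` T2) by apply/fsetP => a; rewrite /T1 /T2 /I; fset_tac.
have eT1 : (S1 `&` T1) `|` (S2 `&` T1) = T1 by apply/fsetP => a; rewrite /T1 /T2 /I; fset_tac.
have eT2 : (S1 `&` T2) `|` (S2 `&` T2) = T2 by apply/fsetP => a; rewrite /T1 /T2 /I; fset_tac.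
have dAB : fdisjoint (S1 `&` T1) (S1 `&` T2) by apply/fdisjointP => a; rewrite /T1 /T2; fset_tac.
have dCD : fdisjoint (S2 `&` T1) (S2 `&` T2) by apply/fdisjointP => a; rewrite /T1 /T2; fset_tac.
have dAC : fdisjoint (S1 `&` T1) (S2 `&` T1).
  by apply/fdisjointP => a; move: (fdisjointP d a); fset_tac.
have dBD : fdisjoint (S1 `&` T2) (S2 `&` T2).
  by apply/fdisjointP => a; move: (fdisjointP d a); fset_tac.
have compat := hcompat d (fdisjointID I A) (esym (fsetID A I)) eS1 eS2 eT1 eT2 dAB dCD dAC dBD x y.
rewrite [restr A _]/restr /= compat /= pack_tr.
rewrite (restrE x dAB eS1); last by apply/fsetP => a; rewrite /T1 /I; fset_tac.
rewrite (restrE y dCD eS2); last by apply/fsetP => a; rewrite /T1 /I; fset_tac.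
by rewrite /= mul_elt_pack.
Qed.

Lemma restr_big (X : Type) (s : seq X) (F : X -> option elt) A w :
  \big[omul/Some one]_(i <- s) F i = Some w ->
  Some (restr A w) = \big[omul/Some one]_(i <- s) omap (restr A) (F i).
Proof.
elim: s w => [|i s IH] w; first by rewrite !big_nil => -[<-]; rewrite restr_one.
rewrite !big_cons => /omul_some [S [T [d [x [y [-> e ->]]]]]].
by rewrite restr_mul -(IH _ e).
Qed.

(** * Reassembly along exact covers *)

Definition reass (l : seq fs) (u : elt) : option elt :=
  \big[omul/Some one]_(B <- l) Some (restr B u).

Lemma reass_restr l u v A : Some v = reass l u -> Some (restr A v) = reass l (restr A u).
Proof.
rewrite /reass => /esym /(restr_big A) ->; apply: eq_bigr => B _ /=.
by rewrite !restr_restr fsetIC.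
Qed.

Lemma reass_reass l1 l2 u v : Some v = reass l1 u ->
  reass l2 v = \big[omul/Some one]_(C <- l2) \big[omul/Some one]_(B <- l1) Some (restr (B `&` C) u).
Proof.
move=> e; apply: eq_bigr => C _.
by rewrite (reass_restr C e); apply: eq_bigr => B _; rewrite restr_restr fsetIC.
Qed.

Lemma reass_comm l1 l2 u v w : Some v = reass l1 u -> Some w = reass l2 u ->
  reass l2 v = reass l1 w.
Proof.
move=> e1 e2; rewrite (reass_reass l2 e1) (reass_reass l1 e2) exchange_big.
by apply: eq_bigr => B _; apply: eq_bigr => C _; rewrite fsetIC.
Qed.

Definition exact_cover (K : fs) (l : seq fs) :=
  forall a, a \in K -> count (fun B : fs => a \in B) l = 1.

Lemma exact_cover_sub K K' l : K' `<=` K -> exact_cover K l -> exact_cover K' l.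
Proof. by move=> sKK' cover a aK'; apply/cover/(fsubsetP sKK'). Qed.

Lemma count_mem_meet (a : nat) (S : fs) (g : fs -> fs) l :
    (forall B : fs, (a \in g B) = (a \in S) && (a \in B)) ->
  count (fun X : fs => a \in X) (map g l) = (a \in S) * count (fun B : fs => a \in B) l.
Proof.
move=> gE; rewrite count_map; case: (boolP (a \in S)) => aS; last first.
  by rewrite mul0n -(count_pred0 l); apply: eq_count => B /=; rewrite gE (negbTE aS).
by rewrite mul1n; apply: eq_count => B /=; rewrite gE aS.
Qed.

Lemma count_mem_fsetIr (a : nat) (S : fs) l :
  count (fun X : fs => a \in X) [seq B `&` S | B <- l] =
  (a \in S) * count (fun B : fs => a \in B) l.
Proof. by apply: count_mem_meet => B; rewrite inE andbC. Qed.

Lemma exact_cover_meet K l1 l2 : exact_cover K l1 -> exact_cover K l2 ->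
  exact_cover K [seq B `&` C | B <- l1, C <- l2].
Proof.
move=> cover1 cover2 a aK; rewrite -(muln1 1) -{1}(cover1 a aK) -(cover2 a aK).
elim: l1 {cover1} => [|B l1 IH] //=; rewrite count_cat IH mulnDl.
by rewrite (@count_mem_meet a B (fsetI B)) // => C; rewrite inE.
Qed.

Lemma exact_cover_fsetU S T l1 l2 : fdisjoint S T -> exact_cover S l1 -> exact_cover T l2 ->
  exact_cover (S `|` T) ([seq B `&` S | B <- l1] ++ [seq C `&` T | C <- l2]).
Proof.
move=> d cover1 cover2 a; rewrite count_cat !count_mem_fsetIr => /fsetUP [aS | aT].
  by rewrite aS (negbTE (fdisjointP d a aS)) cover1.
by rewrite aT (negbTE (fdisjointP_sym d a aT)) cover2.
Qed.

Lemma mem_bigU (a : nat) (l : seq fs) : (a \in Defs.bigU l) = has (fun B : fs => a \in B) l.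
Proof. by elim: l => [|B l IH] /=; rewrite ?inE // IH. Qed.

Lemma fsetI_exact_cover K l : exact_cover K l -> K `&` Defs.bigU l = K.
Proof.
move=> cover; apply/fsetP => a; rewrite inE mem_bigU has_count.
by case: (boolP (a \in K)) => //= aK; rewrite cover.
Qed.

Lemma reass_defined l u :
    (forall a, a \in tag u -> count (fun B : fs => a \in B) l <= 1) ->
  exists w, reass l u = Some w /\ tag w = tag u `&` Defs.bigU l.
Proof.
elim: l => [|B l IH] count_le1; first by exists one; rewrite /reass big_nil /= fsetI0.
have [|w [ew tw]] := IH; first by move=> a /count_le1; apply: leq_trans; rewrite leq_addl.
rewrite /reass big_cons -/(reass l u) ew.
move: (restr B u) (tag_restr B u) => r; elim/pack_ind: r => S x /= tS.
elim/pack_ind: w ew tw => T y _ /= tT.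
case: mul_eltP => [d|/negP[]].
  by exists (pack (hm d x y)); split=> //=; rewrite tS tT; apply/fsetP => a; fset_tac.
apply/fdisjointP => a; rewrite tS tT !inE => /andP [au aB]; apply/negP => /andP [_].
have := count_le1 a au; rewrite /= aB add1n ltnS leqn0 mem_bigU has_count.
by move=> /eqP ->.
Qed.

Lemma reass_idem l u v : exact_cover (tag u) l -> Some v = reass l u -> reass l v = Some v.
Proof.
move=> cover e; rewrite (reass_reass l e) e; apply: eq_big_seq => C Cl.
rewrite (perm_big _ (perm_to_rem Cl)) big_cons big1_seq ?Monoid.mulm1.
  by congr Some; apply: restr_eq; rewrite fsetIid.
move=> B /andP [_ BC]; congr Some; apply: restr_disjoint; apply/fdisjointP => a au.
rewrite !inE; apply/negP => /andP [aB aC].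
have := cover a au; rewrite (permP (perm_to_rem Cl)) /= aC add1n => -[] /eqP.
by rewrite -leqn0 leqNgt -has_count => /negP; apply; apply/hasP; exists B.
Qed.

Definition reass_le K (x y : H K) := exists l, exact_cover K l /\ Some (pack y) = reass l (pack x).

Lemma reass_le_refl K (x : H K) : reass_le x x.
Proof.
exists [:: K]; split; first by move=> a aK /=; rewrite aK.
by rewrite /reass big_seq1 restr_id //= fsubset_refl.
Qed.

Lemma reass_le_trans K (x y z : H K) : reass_le x y -> reass_le y z -> reass_le x z.
Proof.
move=> [l1 [cover1 e1]] [l2 [cover2 e2]].
exists [seq B `&` C | B <- l1, C <- l2]; split; first exact: exact_cover_meet.
by rewrite e2 (reass_reass l2 e1) exchange_big /reass big_allpairs_dep.
Qed.

(* x = reass l1 (reass l2 x) by commutation, and reass l1 is idempotent. *)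
Lemma reass_le_anti K (x y : H K) : reass_le x y -> reass_le y x -> x = y.
Proof.
move=> [l1 [cover1 e1]] [l2 [cover2 e2]].
have [|w [ew tw]] := @reass_defined l2 (pack x); first by move=> a /cover2 ->.
rewrite /= fsetI_exact_cover // in tw.
have ex : Some (pack x) = reass l1 w by rewrite e2 (reass_comm e1 (esym ew)).
have coverw : exact_cover (tag w) l1 by rewrite tw.
by have := reass_idem coverw ex; rewrite -e1 => -[] /pack_inj.
Qed.

Lemma restr_hml S T (d : fdisjoint S T) (x : H S) (y : H T) : restr S (pack (hm d x y)) = pack x.
Proof.
have := restr_mul S d x y.
rewrite (@restr_id S (pack x)) ?fsubset_refl // (@restr_disjoint S (pack y)).
  by rewrite omulC omul1 => -[].
by rewrite fdisjoint_sym.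
Qed.

Lemma restr_hmr S T (d : fdisjoint S T) (x : H S) (y : H T) : restr T (pack (hm d x y)) = pack y.
Proof.
have := restr_mul T d x y.
by rewrite (@restr_id T (pack y)) ?fsubset_refl // (@restr_disjoint T (pack x)) // omul1 => -[].
Qed.

Lemma hd_hm S T (d : fdisjoint S T) (x : H S) (y : H T) : hd d (hm d x y) = (x, y).
Proof.
apply: injective_projections; apply: pack_inj.
  by rewrite -restr_hdl restr_hml.
by rewrite -restr_hdr restr_hmr.
Qed.

Lemma reass_cat S T l1 l2 u :
  reass ([seq B `&` S | B <- l1] ++ [seq C `&` T | C <- l2]) u =
  omul (reass l1 (restr S u)) (reass l2 (restr T u)).
Proof.
rewrite /reass big_cat !big_map.
by congr omul; apply: eq_bigr => B _; rewrite restr_restr fsetIC.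
Qed.

Lemma reass_le_restr K A (x y : H K) : reass_le x y ->
  exists l, exact_cover (K `&` A) l /\ Some (restr A (pack y)) = reass l (restr A (pack x)).
Proof.
move=> [l [cover e]]; exists l; split; last exact: reass_restr.
by apply: exact_cover_sub cover; apply: fsubsetIl.
Qed.

Lemma reass_le_hd S T (d : fdisjoint S T) x x' :
  reass_le x x' -> reass_le (hd d x).1 (hd d x').1 /\ reass_le (hd d x).2 (hd d x').2.
Proof.
move=> le_xx'; split.
  have [l] := reass_le_restr S le_xx'; rewrite fsetUKC !(restr_hdl d); by exists l.
have [l] := reass_le_restr T le_xx'; rewrite fsetUK !(restr_hdr d); by exists l.
Qed.

Lemma reass_le_glue S T (d : fdisjoint S T) x (y : H S) (z : H T) :
  reass_le (hd d x).1 y -> reass_le (hd d x).2 z -> reass_le x (hm d y z).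
Proof.
move=> [l1 [cover1 e1]] [l2 [cover2 e2]].
exists ([seq B `&` S | B <- l1] ++ [seq C `&` T | C <- l2]); split.
  exact: exact_cover_fsetU.
by rewrite reass_cat (restr_hdl d) (restr_hdr d) -e1 -e2 /= mul_elt_pack.
Qed.

Lemma reass_le_hm S T (d : fdisjoint S T) x x' y y' :
  reass_le x x' -> reass_le y y' -> reass_le (hm d x y) (hm d x' y').
Proof. by move=> le_xx' le_yy'; apply: reass_le_glue; rewrite hd_hm. Qed.

Lemma reass_le_adjoint S T (d : fdisjoint S T) x y z :
  reass_le (hd d x).1 y /\ reass_le (hd d x).2 z <-> reass_le x (hm d y z).
Proof.
split=> [[le_y le_z] | /(reass_le_hd d)]; first exact: reass_le_glue.
by rewrite hd_hm.
Qed.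

(** * Relabelling *)

Lemma pack_hrel K J J' f (p : bij_on f K J) (p' : bij_on f K J') (x : H K) :
  pack (hrel p x) = pack (hrel p' x).
Proof.
have eJ : J = J' by rewrite -(proj2 p) (proj2 p').
by subst J'; rewrite (hrel_ext p p' (fun _ _ => erefl)).
Qed.

Lemma hrel_tr K K' J J' f (eK : K = K') (eJ : J = J') (p : bij_on f K J) (p' : bij_on f K' J')
    (x : H K) :
  hrel p' (tr eK x) = tr eJ (hrel p x).
Proof. by subst K' J'; apply: hrel_ext. Qed.

(* Junk value u when f is not injective on the support of u. *)
Definition relabel (f : nat -> nat) (u : elt) : elt :=
  let: existT K x := u in
  if card_in_imfsetP f K is ReflectT inj then
    pack (hrel (conj inj erefl : bij_on f K [fset f a | a in K]) x)
  else u.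
Arguments relabel : simpl never.

Lemma relabel_pack K J f (p : bij_on f K J) (x : H K) : relabel f (pack x) = pack (hrel p x).
Proof.
by rewrite /relabel /=; case: card_in_imfsetP => [inj | []]; [apply: pack_hrel | case: p].
Qed.

Lemma bij_on_sub f (K K' : fs) : {in K &, injective f} -> K' `<=` K ->
  bij_on f K' [fset f a | a in K'].
Proof. by move=> inj sK'K; split=> // a b /(fsubsetP sK'K) aK /(fsubsetP sK'K); apply: inj. Qed.

Lemma fdisjoint_imfset f (K S T : fs) : {in K &, injective f} -> S `<=` K -> T `<=` K ->
  fdisjoint S T -> fdisjoint [fset f a | a in S] [fset f a | a in T].
Proof.
move=> inj sSK sTK d; apply/fdisjointP => _ /imfsetP [a aS ->]; apply/imfsetP => -[b bT].
move/(inj _ _ (fsubsetP sSK _ aS) (fsubsetP sTK _ bT)) => eab; subst b.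
by move: (fdisjointP d a aS); rewrite bT.
Qed.

Lemma tag_relabel f u : {in tag u &, injective f} -> tag (relabel f u) = [fset f a | a in tag u].
Proof.
by elim/pack_ind: u => K x /= inj; rewrite (relabel_pack (bij_on_sub inj (fsubset_refl K))).
Qed.

Lemma relabel_restr f A u : {in tag u &, injective f} ->
  relabel f (restr A u) = restr [fset f a | a in tag u `&` A] (relabel f u).
Proof.
elim/pack_ind: u => K x /= inj.
pose S := K `&` A; pose T := K `\` A.
have sSK : S `<=` K by rewrite fsubsetIl.
have sTK : T `<=` K by rewrite fsubsetDl.
have pK := bij_on_sub inj (fsubset_refl K).
have d := fdisjointID K A.
have dST := fdisjoint_imfset inj sSK sTK d.
have eK : [fset f a | a in K] = [fset f a | a in S] `|` [fset f a | a in T].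
  by rewrite -imfsetU fsetID.
have pST : bij_on f (S `|` T) ([fset f a | a in S] `|` [fset f a | a in T]).
  by split; [rewrite fsetID | rewrite imfsetU].
rewrite (relabel_pack pK) (restrE (hrel pK x) dST eK); last exact/fsetIidPr/subset_imfset/fsubsetP.
rewrite -(hrel_tr (esym (fsetID A K)) eK pK pST).
rewrite (hd_nat d dST pST (bij_on_sub inj sSK) (bij_on_sub inj sTK)) /=.
by rewrite -(relabel_pack (bij_on_sub inj sSK)) (bool_irrelevance d (fdisjointID K A)).
Qed.

Lemma relabel_mul f S T (d : fdisjoint S T) (x : H S) (y : H T) : {in S `|` T &, injective f} ->
  Some (relabel f (pack (hm d x y))) = omul (Some (relabel f (pack x))) (Some (relabel f (pack y))).
Proof.
move=> inj.
have sS : S `<=` S `|` T by rewrite fsubsetUl.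
have sT : T `<=` S `|` T by rewrite fsubsetUr.
have p : bij_on f (S `|` T) ([fset f a | a in S] `|` [fset f a | a in T]).
  by split; last rewrite imfsetU.
have dST := fdisjoint_imfset inj sS sT d.
rewrite (relabel_pack p) (relabel_pack (bij_on_sub inj sS)) (relabel_pack (bij_on_sub inj sT)).
by rewrite (hm_nat d dST p (bij_on_sub inj sS) (bij_on_sub inj sT)) /= (mul_elt_pack dST).
Qed.

Lemma relabel_big (X : Type) (s : seq X) (F : X -> option elt) f w :
  \big[omul/Some one]_(i <- s) F i = Some w -> {in tag w &, injective f} ->
  Some (relabel f w) = \big[omul/Some one]_(i <- s) omap (relabel f) (F i).
Proof.
elim: s w => [|i s IH] w.
  rewrite !big_nil => -[<-] inj; congr Some; apply: tag0.
  by rewrite tag_relabel //= imfset0.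
rewrite !big_cons => /omul_some [S [T [d [x [y [-> e ->]]]]]] /= inj.
rewrite relabel_mul // -(IH _ e) // => a b aT bT.
by apply: inj; rewrite inE ?aT ?bT ?orbT.
Qed.

Lemma reass_le_relabel I J f (p : bij_on f I J) (x y : H I) :
  reass_le x y -> reass_le (hrel p x) (hrel p y).
Proof.
move=> [l [cover e]]; have inj := proj1 p.
exists [seq [fset f a | a in I `&` B] | B <- l]; split.
  move=> b; rewrite -(proj2 p) => /imfsetP [a aI ->]; rewrite count_map -(cover a aI).
  apply: eq_count => B /=; apply/imfsetP/idP => [[a']|aB]; last by exists a; rewrite // inE aI.
  by rewrite inE => /andP [a'I a'B] /(inj _ _ aI a'I) ->.
rewrite -(relabel_pack p) (relabel_big (esym e)) /reass ?big_map //.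
by apply: eq_bigr => B _ /=; rewrite relabel_restr // (relabel_pack p).
Qed.

(** * Set partitions *)

Lemma fsubset_bigU C l : C \in l -> C `<=` Defs.bigU l.
Proof.
elim: l => [|B l IH] //=; rewrite inE => /orP [/eqP ->|Cl]; first exact: fsubsetUl.
exact: fsubset_trans (IH Cl) (fsubsetUr _ _).
Qed.

Lemma reas_reass l (pl : is_setpart l) (x : H (Defs.bigU l)) :
  Some (pack (reas pl x)) = reass l (pack x).
Proof.
elim: l pl x => [|B l IH] pl x /=; first by rewrite /reass big_nil pack0.
set d := setpart_disj pl.
rewrite /reass big_cons -/(reass l (pack x)) (restr_hdl d x).
have -> : reass l (pack x) = reass l (pack (hd d x).2).
  apply: eq_big_seq => C Cl; rewrite -(restr_hdr d x) restr_restr; congr Some.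
  by apply: restr_eq => /=; apply/fsetP => a; move: (fsubsetP (fsubset_bigU Cl) a); fset_tac.
by rewrite -(IH (setpart_tail pl)) /= mul_elt_pack.
Qed.

Lemma setpart_exact_cover l : is_setpart l -> exact_cover (Defs.bigU l) l.
Proof.
elim: l => [|B l IH] //= /and3P [_ d pl] a /fsetUP [aB | al] /=.
  by rewrite aB; move: (fdisjointP d a aB); rewrite mem_bigU has_count -eqn0Ngt => /eqP ->.
have aNB : a \notin B by apply: contraL al; apply: (fdisjointP d).
by rewrite (negbTE aNB) IH.
Qed.

Lemma count_le1_setpart l : (forall B, B \in l -> B != fset0) ->
  (forall a, count (fun B : fs => a \in B) l <= 1) -> is_setpart l.
Proof.
elim: l => [|B l IH] //= ne count_le1; apply/and3P; split.
- by apply: ne; rewrite inE eqxx.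
- apply/fdisjointP => a aB; move: (count_le1 a); rewrite /= aB add1n ltnS leqn0 => /eqP c0.
  by rewrite mem_bigU has_count c0.
- apply: IH => [C Cl|a]; first by apply: ne; rewrite inE Cl orbT.
  by apply: leq_trans (count_le1 a); rewrite leq_addl.
Qed.

Lemma exact_cover_setpart K l (x : H K) : exact_cover K l ->
  exists l', [/\ is_setpart l', Defs.bigU l' = K & reass l' (pack x) = reass l (pack x)].
Proof.
move=> cover; pose l' := [seq B <- [seq B `&` K | B <- l] | B != fset0].
have count_l' a : count (fun B : fs => a \in B) l' = (a \in K) * count (fun B : fs => a \in B) l.
  rewrite count_filter -count_mem_fsetIr; apply: eq_count => X /=.
  by case: (boolP (a \in X)) => //= aX; apply: contraTneq aX => ->.
exists l'; split.
- apply: count_le1_setpart => [X|a]; first by rewrite mem_filter => /andP [].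
  by rewrite count_l'; case: (boolP (a \in K)) => aK; rewrite ?mul0n // mul1n cover.
- apply/fsetP => a; rewrite mem_bigU has_count count_l'.
  by case: (boolP (a \in K)) => //= aK; rewrite cover.
- rewrite /reass /l' big_filter big_map big_mkcond; apply: eq_bigr => B _.
  case: eqP => [BK0|_]; congr Some; last by apply: restr_eq; rewrite /= (fsetIC B K) fsetIA fsetIid.
  rewrite restr_disjoint //; apply/fdisjointP => a /= aK; apply/negP => aB.
  by move/fsetP/(_ a): BK0; rewrite !inE aB aK.
Qed.

Lemma reassemblyE K (x y : H K) : reassembly H K x y <-> reass_le x y.
Proof.
split=> [[l [pl [e ->]]] | [l [cover e]]].
  by subst K; exists l; split; [apply: setpart_exact_cover | apply: reas_reass].
have [l' [pl' eK ereass]] := exact_cover_setpart x cover.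
exists l', pl', eK; subst K; apply: pack_inj.
by have [] : Some (pack y) = Some (pack (reas pl' x)) by rewrite e -ereass reas_reass.
Qed.

End ReassemblyOrder.

Theorem mainTheorem8 (H : set_hopf_monoid) :
  commutative_hm H -> cocommutative_hm H ->
  is_poset_hopf H (reassembly H) /\ self_adjoint H (reassembly H).
Proof.
move=> Hcom Hcoc; have le_iff := reassemblyE Hcom Hcoc.
split; [split|].
- move=> I; split; [|split].
  + by move=> x; apply/le_iff/reass_le_refl.
  + by move=> x y /le_iff le_xy /le_iff; apply: reass_le_anti.
  + by move=> x y z /le_iff le_xy /le_iff le_yz; apply/le_iff/(reass_le_trans Hcom le_xy).
- by move=> I J f p x y /le_iff le_xy; apply/le_iff/reass_le_relabel.
- by move=> S T d x x' y y' /le_iff le_xx' /le_iff le_yy'; apply/le_iff/reass_le_hm.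
- by move=> S T d x x' /le_iff /(reass_le_hd Hcoc d) [/le_iff le1 /le_iff le2].
- by move=> S T d x y z; rewrite !le_iff; apply: reass_le_adjoint.
Qed.
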